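(* Let $P\in\mathbb{R}_+^{n\times n}$ be sub-stochastic, $w\in\mathbb{R}^n_+$, $c\in\mathbb{R}^n$, and let $\mathcal X=\{x\in\mathbb{R}^n:\,x=S_0^w(P'x+c)\}$. For $x\in\mathcal X$ define the partition $\mathcal V=\{1,\dots,n\}=\mathcal V^x_-\cup\mathcal V^x_0\cup\mathcal V^x_+$ by $\mathcal V^x_+=\{i:\,c_i+\sum_{k}P_{ki}x_k>w_i\}$, $\mathcal V^x_0=\{i:\,0\le c_i+\sum_kP_{ki}x_k\le w_i\}$, $\mathcal V^x_-=\{i:\,c_i+\sum_kP_{ki}x_k<0\}$. Then this partition is the same for all equilibria $x\in\mathcal X$.
   Context: $P$ sub-stochastic means $P$ nonnegative with $P\mathbbm{1}\le\mathbbm{1}$ (stochastic matrices included). $(S_0^w(x))_i=\min\{\max\{x_i,0\},w_i\}$; $P'$ is the transpose. *)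

From mathcomp Require Import all_boot all_order all_algebra.
From mathcomp Require Import reals.
Set Implicit Arguments. Unset Strict Implicit. Unset Printing Implicit Defensive.
Import Order.TTheory GRing.Theory Num.Theory.
Local Open Scope ring_scope.

Definition substochastic (R : realType) (n : nat) (P : 'M[R]_n) : Prop :=
  (forall i j, 0 <= P i j) /\ (forall i, \sum_(j < n) P i j <= 1).

Definition S0 (R : realType) (n : nat) (w y : 'cV[R]_n) : 'cV[R]_n :=
  \col_i Num.min (Num.max (y i 0) 0) (w i 0).

Definition preact (R : realType) (n : nat) (P : 'M[R]_n) (c x : 'cV[R]_n)
  : 'cV[R]_n := P^T *m x + c.

Definition equilibrium (R : realType) (n : nat) (P : 'M[R]_n) (w c x : 'cV[R]_n)
  : Prop := x = S0 w (preact P c x).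

Definition Vplus (R : realType) (n : nat) (P : 'M[R]_n) (w c x : 'cV[R]_n)
  : {set 'I_n} := [set i | preact P c x i 0 > w i 0].
Definition Vzero (R : realType) (n : nat) (P : 'M[R]_n) (w c x : 'cV[R]_n)
  : {set 'I_n} := [set i | (0 <= preact P c x i 0) && (preact P c x i 0 <= w i 0)].
Definition Vminus (R : realType) (n : nat) (P : 'M[R]_n) (w c x : 'cV[R]_n)
  : {set 'I_n} := [set i | preact P c x i 0 < 0].

From mathcomp Require Import all_boot all_order all_algebra.
From mathcomp Require Import reals.
From mathcomp Require Import lra.
Set Implicit Arguments. Unset Strict Implicit. Unset Printing Implicit Defensive.
Import Order.TTheory GRing.Theory Num.Theory.
Local Open Scope ring_scope.

(* The clipping map S_0^w is 1-Lipschitz in every coordinate and P' is a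
   contraction for the l1 norm, so for two equilibria x, y
   sum_i |x_i - y_i| <= sum_i |(P'(x - y))_i| <= sum_i |x_i - y_i|: every
   coordinate of the clipping is an isometry on the pair of arguments
   (P'x + c)_i, (P'y + c)_i.  Clipping to [0, w_i] is isometric on a pair
   only when both points lie in the same region (< 0, in [0, w_i], > w_i).
   This needs no sign condition on w: for w_i < 0 the clipping is constant,
   hence isometric only on equal arguments. *)

Definition clip {R : realDomainType} (w a : R) := Num.min (Num.max a 0) w.

Ltac case_min_max_norm :=
  repeat match goal with
  | |- context [Num.max ?a ?b] => rewrite (maxEle a b); case: (lerP a b) => ?
  | |- context [Num.min ?a ?b] => rewrite (minEle a b); case: (lerP a b) => ?
  | |- context [`|?z|] =>
      case: (lerP 0 z) => ?; [rewrite (ger0_norm (x := z)) //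
                             | rewrite (ltr0_norm (x := z)) //]
  end.

Section Clip.
Variables (R : realDomainType) (w : R).

Lemma clip_lipschitz (a b : R) : `|clip w a - clip w b| <= `|a - b|.
Proof. by rewrite /clip; case_min_max_norm; lra. Qed.

Lemma clip_isometry_same_region (a b : R) :
  `|clip w a - clip w b| = `|a - b| -> (a < 0) = (b < 0) /\ (w < a) = (w < b).
Proof.
rewrite /clip; case: (ltrP a 0) => ?; case: (ltrP b 0) => ?;
  case: (ltrP w a) => ?; case: (ltrP w b) => ?; case_min_max_norm; lra.
Qed.

End Clip.

Lemma ler_sum_eq (I : finType) (R : numDomainType) (F G : I -> R) :
  (forall i, F i <= G i) -> \sum_i G i <= \sum_i F i -> forall i, F i = G i.
Proof.
move=> leFG leGF i; apply/eqP; rewrite eq_sym -subr_eq0; apply/eqP.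
apply: (psumr_eq0P (P := predT) (F := fun j => G j - F j)) => // [j _|].
  by rewrite subr_ge0.
by apply/eqP; rewrite eq_le sumrB subr_le0 leGF subr_ge0 ler_sum.
Qed.

Lemma substochastic_trmx_l1_contraction (R : realType) (n : nat)
    (P : 'M[R]_n) (z : 'cV[R]_n) :
  substochastic P -> \sum_i `|(P^T *m z) i 0| <= \sum_i `|z i 0|.
Proof.
case=> P_ge0 P_rows.
apply: (@le_trans _ _ (\sum_i \sum_k P k i * `|z k 0|)).
  apply: ler_sum => i _; rewrite mxE; apply: (le_trans (ler_norm_sum _ _ _)).
  by apply: ler_sum => k _; rewrite mxE normrM ger0_norm.
rewrite exchange_big /=; apply: ler_sum => k _.
by rewrite -mulr_suml ler_piMl.
Qed.

Lemma preactB (R : realType) (n : nat) (P : 'M[R]_n) (c x y : 'cV[R]_n) :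
  preact P c x - preact P c y = P^T *m (x - y).
Proof. by rewrite /preact mulmxBr opprD addrACA subrr addr0. Qed.

Lemma equilibriumE (R : realType) (n : nat) (P : 'M[R]_n) (w c x : 'cV[R]_n) :
  equilibrium P w c x -> forall i, x i 0 = clip (w i 0) (preact P c x i 0).
Proof. by move=> {1}-> i; rewrite mxE. Qed.

Lemma equilibria_clip_isometry (R : realType) (n : nat) (P : 'M[R]_n)
    (w c x y : 'cV[R]_n) :
  substochastic P -> equilibrium P w c x -> equilibrium P w c y ->
  forall i, `|x i 0 - y i 0| = `|preact P c x i 0 - preact P c y i 0|.
Proof.
move=> hP hx hy; apply: ler_sum_eq => [i|].
  by rewrite (equilibriumE hx i) (equilibriumE hy i) clip_lipschitz.
have := substochastic_trmx_l1_contraction (x - y) hP; rewrite -(preactB P c).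
(* Generalized so that [mxE] cannot unfold [preact]. *)
move: (preact P c x) (preact P c y) => u v.
by under eq_bigr do rewrite !mxE; under [X in _ <= X -> _]eq_bigr do rewrite !mxE.
Qed.

Theorem proposition2 (R : realType) (n : nat) (P : 'M[R]_n) (w c : 'cV[R]_n)
  (hP : substochastic P) (hw : forall i, 0 <= w i 0)
  (x y : 'cV[R]_n) (hx : equilibrium P w c x) (hy : equilibrium P w c y) :
  [/\ Vminus P w c x = Vminus P w c y,
      Vzero P w c x = Vzero P w c y &
      Vplus P w c x = Vplus P w c y].
Proof.
have same_region i :
    (preact P c x i 0 < 0) = (preact P c y i 0 < 0) /\
    (w i 0 < preact P c x i 0) = (w i 0 < preact P c y i 0).
  apply: clip_isometry_same_region.
  rewrite -(equilibriumE hx i) -(equilibriumE hy i).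
  by rewrite (equilibria_clip_isometry hP hx hy).
split; apply/setP => i; rewrite !inE; have [neg pos] := same_region i => //.
by rewrite !leNgt neg pos.
Qed.
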